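(* Let $\lambda>0$, $\xi>0$, $v_2<v_1$ with either $v_2<0<v_1$ or $0<v_2<v_1$, $q\in[0,1]$, and let $\tilde p(x,t)$ be the (generalized) density of the position $\tilde X(t)$ of the extended telegraph process driven by GCPs with parameter $\lambda$ with Poissonian resets to the origin at rate $\xi$, with $\tilde X(0)=0$ and random initial velocity $V_0$, $P\{V_0=v_1\}=q=1-P\{V_0=v_2\}$. Then for $x\in\mathbb R$, $$ \lim_{t\to+\infty}\tilde p(x,t)=q\overline H_1(x)+(1-q)\overline H_2(x)+\frac{\xi e^{\xi/\lambda}}{v_1-v_2}\Gamma\Big[0,\Big(M_x+\frac1\lambda\Big)\xi\Big]\quad\text{if } v_2<0<v_1, $$ $$ \lim_{t\to+\infty}\tilde p(x,t)=q\overline H_1(x)+(1-q)\overline H_2(x)+\mathbb 1_{\{x>0\}}\frac{\xi e^{\xi/\lambda}}{v_1-v_2}\Gamma\Big[0,\Big(\frac x{v_1}+\frac1\lambda\Big)\xi,\Big(\frac x{v_2}+\frac1\lambda\Big)\xi\Big]\quad\text{if } 0<v_2<v_1, $$ where $\overline H_j(x)=\mathrm{sgn}(v_j)\mathbb 1_{\{x/v_j>0\}}\frac{\xi e^{-\xi x/v_j}}{v_j+\lambda x}$, $j=1,2$.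
   Context: GCP with intensity $\lambda>0$: a Poisson process whose rate is random, exponentially distributed with mean $\lambda$; increments satisfy $P\{\tilde N_\lambda(t+s)-\tilde N_\lambda(t)=k\}=\frac{1}{1+\lambda s}(\frac{\lambda s}{1+\lambda s})^k$. The process: a particle starts at the origin with initial velocity $V(0)$ ($v_1,v_2\neq0$, $v_2<v_1$), moves with velocity alternating between $v_1$ and $v_2$, the periods at velocity $v_1$ and at $v_2$ being governed by two independent GCPs of intensity $\lambda$; additionally it is instantaneously reset to the origin at the epochs of an independent Poisson process of rate $\xi$, restarting afresh with its initial velocity. Conditional on $V(0)=v_j$, the density is $\tilde p(x,t|v_j)=e^{-\xi t}p(x,t|v_j)+\xi\int_0^te^{-\xi s}p(x,s|v_j)ds$, where $p(x,t|v_j)=\frac{\delta(x-v_jt)}{1+\lambda t}+\mathbb 1_{\{v_2t<x<v_1t\}}\frac{\lambda}{(v_1-v_2)(1+\lambda t)}$ ($\delta$ Dirac delta); $\tilde p(x,t)=q\tilde p(x,t|v_1)+(1-q)\tilde p(x,t|v_2)$. Notation: $M_x=\max\{x/v_1,x/v_2\}$; $\Gamma(a,z)=\int_z^\infty s^{a-1}e^{-s}ds$; $\Gamma(a,z_0,z_1)=\int_{z_0}^{z_1}s^{a-1}e^{-s}ds$. *)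

From HB Require Import structures.
From mathcomp Require Import all_boot all_order all_algebra.
From mathcomp Require Import all_classical all_reals all_analysis.
Set Implicit Arguments. Unset Strict Implicit. Unset Printing Implicit Defensive.
Import Order.TTheory GRing.Theory Num.Theory.
Import numFieldNormedType.Exports.
Local Open Scope classical_set_scope.
Local Open Scope ring_scope.
Local Open Scope ereal_scope.

Section Defs.
Variable R : realType.
Local Notation mu := (@lebesgue_measure R).

Definition dirac_pt (y : R) : \bar R := if y == 0%R then +oo else 0.

(* Sifting property: int_0^t g(s) delta(x - vj s) ds
   = g(x/vj)/|vj| * 1_{0 < x/vj < t}. *)
Definition delta_sift (g : R -> R) (vj x t : R) : R :=
  if ((0 < x / vj) && (x / vj < t))%R then (g (x / vj) / `|vj|)%R else 0%R.

Definition p_ac (lam v1 v2 x t : R) : R :=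
  if ((v2 * t < x) && (x < v1 * t))%R
  then (lam / ((v1 - v2) * (1 + lam * t)))%R else 0%R.

Definition p_dens (lam v1 v2 vj x t : R) : \bar R :=
  dirac_pt (x - vj * t)%R * (1 / (1 + lam * t))%:E + (p_ac lam v1 v2 x t)%:E.

Definition ptilde_j (lam xi v1 v2 vj x t : R) : \bar R :=
  (expR (- xi * t))%:E * p_dens lam v1 v2 vj x t
  + xi%:E * ((delta_sift (fun s => expR (- xi * s) / (1 + lam * s))%R vj x t)%:E
             + \int[mu]_(s in `[0%R, t]) (expR (- xi * s) * p_ac lam v1 v2 x s)%:E).

Definition ptilde (lam xi v1 v2 q x t : R) : \bar R :=
  q%:E * ptilde_j lam xi v1 v2 v1 x t + (1 - q)%:E * ptilde_j lam xi v1 v2 v2 x t.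

Definition Gamma_up (a z : R) : \bar R :=
  \int[mu]_(s in `[z, +oo[) (s `^ (a - 1) * expR (- s))%:E.
Definition Gamma_seg (a z0 z1 : R) : \bar R :=
  \int[mu]_(s in `[z0, z1]) (s `^ (a - 1) * expR (- s))%:E.

Definition Hbar (lam xi vj x : R) : R :=
  if (0 < x / vj)%R
  then (Num.sg vj * (xi * expR (- xi * x / vj)) / (vj + lam * x))%R else 0%R.

Definition Mx (v1 v2 x : R) : R := (Num.max (x / v1) (x / v2))%R.

End Defs.

(** For [t > max (x/v1, x/v2)] the Dirac parts of [p~(x, t | vj)] vanish and the
    sifted Dirac term is the constant [Hbar_j / xi], so [p~(x, t)] equals
    [q Hbar_1 + (1 - q) Hbar_2 + e^{-xi t} p_ac(x, t) + xi int_0^t e^{-xi s} p_ac(x, s) ds].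
    Here [e^{-xi t} p_ac(x, t)] tends to [0] and the integral increases to its value over
    [[0, +oo[].  There the integrand is [lam/(v1 - v2) e^{-xi s}/(1 + lam s)] on the
    cone [v2 s < x < v1 s], which is [s > M_x] when [v2 < 0 < v1] and
    [x/v1 < s < x/v2] (empty unless [x > 0]) when [0 < v2 < v1]; the substitution
    [u = (s + 1/lam) xi] turns these integrals into incomplete Gamma functions. *)

From HB Require Import structures.
From mathcomp Require Import all_boot all_order all_algebra.
From mathcomp Require Import all_classical all_reals all_analysis.
From mathcomp Require Import measurable_realfun.
From mathcomp Require Import ring.
Import Order.TTheory GRing.Theory Num.Theory.
Import numFieldNormedType.Exports.
Local Open Scope classical_set_scope.
Local Open Scope ring_scope.

Lemma cvgr_expR_Nmul {R : realType} (c : R) : 0 < c -> expR (- c * t) @[t --> +oo] --> 0.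
Proof.
move=> c_gt0; under eq_fun do rewrite mulNr.
apply: (cvg_comp (fun t => c * t) (fun z => expR (- z))); last exact: cvgr_expR.
by apply: gt0_cvgMry => //; exact: cvg_id.
Qed.

Section integral_itv_cvgy.
Context {R : realType}.
Local Notation mu := (@lebesgue_measure R).

Lemma ge0_integral_itv_cvgy (a : R) (f : R -> \bar R) :
  measurable_fun `[a, +oo[ f -> (forall s, a <= s -> (0 <= f s)%E) ->
  (\int[mu]_(s in `[a, t]) f s)%E @[t --> +oo] --> (\int[mu]_(s in `[a, +oo[) f s)%E.
Proof.
move=> mf f_ge0.
have sub_ay t : `[a, t] `<=` `[a, +oo[.
  by move=> s /=; rewrite !in_itv /= andbT => /andP[].
have mf_at t : measurable_fun `[a, t] f := measurable_funS (measurable_itv _) (sub_ay t) mf.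
have nd : nondecreasing_fun (fun t => (\int[mu]_(s in `[a, t]) f s)%E).
  move=> u v uv; apply: ge0_subset_integral => //.
  - exact: mf_at.
  - by move=> s /=; rewrite in_itv /= => /andP[a_s _]; exact: f_ge0.
  - by move=> s /=; rewrite !in_itv /= => /andP[-> su]; exact: le_trans uv.
have a_n_y : a + n%:R @[n --> \oo] --> +oo.
  by apply/cvgryPge => r; near do rewrite -lerBlDl; exact: nbhs_infty_ger.
have cvg_sup := cvg_comp _ _ a_n_y (nondecreasing_cvge nd).
have cvg_seq : (\int[mu]_(s in `[a, (a + n%:R)%R]) f s)%E @[n --> \oo]
    --> (\int[mu]_(s in `[a, +oo[) f s)%E.
  rewrite itv_bndy_bigcup_BRight; apply: ge0_nondecreasing_set_cvg_integral => //.
  - move=> m n mn; apply/subsetPset => s /=; rewrite !in_itv /= => /andP[-> sm].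
    by rewrite (le_trans sm) // lerD2l ler_nat.
  - by move=> n; exact: mf_at.
  - by move=> n s /=; rewrite in_itv /= => /andP[a_s _]; exact: f_ge0.
suff <- : ereal_sup (range (fun t => (\int[mu]_(s in `[a, t]) f s)%E)) =
    (\int[mu]_(s in `[a, +oo[) f s)%E by exact: nondecreasing_cvge.
by move/cvg_lim : cvg_sup => <- //; move/cvg_lim : cvg_seq => ->.
Unshelve. all: by end_near.
Qed.

End integral_itv_cvgy.

(* probability that neither a reset (rate [xi]) nor a GCP velocity switch
   ([P{N(s) = 0} = 1/(1 + lam s)]) occurs before time [s] *)
Definition survival {R : realType} (lam xi s : R) : R :=
  expR (- xi * s) / (1 + lam * s).

Section incomplete_gamma_affine.
Context {R : realType}.
Local Notation mu := (@lebesgue_measure R).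
Variables lam xi : R.
Hypotheses (lam_gt0 : 0 < lam) (xi_gt0 : 0 < xi).

Lemma survival_ge0 s : 0 < 1 + lam * s -> 0 <= survival lam xi s.
Proof. by move=> s_gt; rewrite divr_ge0 ?expR_ge0 ?ltW. Qed.

Lemma continuous_survival s : 0 < 1 + lam * s -> {for s, continuous (survival lam xi)}.
Proof.
move=> s_gt; apply: continuousM; last first.
  by apply: continuousV; [rewrite gt_eqF | apply: continuousD; [exact: cst_continuous
    | apply: continuousM; [exact: cst_continuous | exact: cvg_id]]].
apply: continuous_comp; last exact: continuous_expR.
by apply: continuousM; [exact: cst_continuous | exact: cvg_id].
Qed.

Lemma measurable_survival (D : set R) : measurable D ->
  (forall s, D s -> 0 < 1 + lam * s) -> measurable_fun D (survival lam xi).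
Proof.
move=> mD D_gt; apply: subspace_continuous_measurable_fun => //.
by apply: continuous_in_subspaceT => s /set_mem /D_gt; exact: continuous_survival.
Qed.

Let F (s : R) : R := (s + 1 / lam) * xi.
Let G (u : R) : R := u^-1 * expR (- u).

Let F'E : F^`()%classic = cst xi.
Proof.
by apply/funext => s; rewrite derive1E /F derive_val /= scaler0 add0r addr0 [_ *: _]mulr1.
Qed.

Let F_derivable s : derivable F s 1.
Proof. exact: ex_derive. Qed.

Let F_continuous : continuous F.
Proof. by move=> s; apply: differentiable_continuous; exact/derivable1_diffP. Qed.

Let F_increasing : {homo F : s t / s < t}.
Proof. by move=> s t st; rewrite /F ltr_pM2r // ltrD2r. Qed.

Let G_continuous u : u != 0 -> {for u, continuous G}.
Proof.
move=> u0; apply: continuousM; first by apply: continuousV => //; exact: cvg_id.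
by apply: continuous_comp; [exact: continuousN | exact: continuous_expR].
Qed.

Let one_add_gt0 s : 0 < s + 1 / lam -> 0 < 1 + lam * s.
Proof.
by move=> s_gt; rewrite (_ : 1 + lam * s = lam * (s + 1 / lam)) ?mulr_gt0 //; field; rewrite gt_eqF.
Qed.

Let GF s : 0 < s + 1 / lam ->
  ((G \o F) * F^`()%classic) s = lam * expR (- (xi / lam)) * survival lam xi s.
Proof.
move=> s_gt; rewrite F'E; have -> : ((G \o F) * cst xi) s = G (F s) * xi by [].
rewrite /G /F /survival.
have -> : - ((s + 1 / lam) * xi) = - xi * s + - (xi / lam) by ring.
rewrite expRD; field.
by rewrite !gt_eqF // ?one_add_gt0 // -[lam * s + 1]addrC one_add_gt0.
Qed.

Let integral_GF (D : set R) : measurable D -> (forall s, D s -> 0 < s + 1 / lam) ->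
  (\int[mu]_(s in D) (((G \o F) * F^`()%classic) s)%:E =
   (lam * expR (- (xi / lam)))%:E * \int[mu]_(s in D) (survival lam xi s)%:E)%E.
Proof.
move=> mD D_gt; rewrite -ge0_integralZl_EFin //.
- by apply: eq_integral => s /set_mem /D_gt s_gt; rewrite GF // EFinM.
- by move=> s /D_gt /one_add_gt0 /survival_ge0.
- by apply/measurable_EFinP; apply: measurable_survival => // s /D_gt /one_add_gt0.
- by rewrite mulr_ge0 ?expR_ge0 ?ltW.
Qed.

Let integral_Gamma0 (D : set R) : (forall u, D u -> 0 < u) ->
  (\int[mu]_(u in D) (u `^ (0 - 1) * expR (- u))%:E = \int[mu]_(u in D) (G u)%:E)%E.
Proof.
by move=> D_gt0; apply: eq_integral => u /set_mem /D_gt0 u_gt0; rewrite sub0r powR_inv1 // ltW.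
Qed.

Lemma Gamma_up0_affine a : 0 < a + 1 / lam ->
  Gamma_up 0 ((a + 1 / lam) * xi) =
  ((lam * expR (- (xi / lam)))%:E * \int[mu]_(s in `[a, +oo[) (survival lam xi s)%:E)%E.
Proof.
move=> a_gt; have Fa_gt0 : 0 < F a by rewrite mulr_gt0.
rewrite /Gamma_up integral_Gamma0 -?integral_GF //; last first.
- by move=> u; rewrite /= in_itv /= andbT; exact: lt_le_trans.
- by move=> s; rewrite /= in_itv /= andbT => a_s; rewrite (lt_le_trans a_gt) // lerD2r.
rewrite -[(a + 1 / lam) * xi]/(F a); apply: increasing_ge0_integration_by_substitutiony.
- by move=> s t _ _; exact: F_increasing.
- by rewrite F'E => s _; exact: cst_continuous.
- by rewrite F'E; exact: is_cvg_cst.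
- by rewrite F'E; exact: is_cvg_cst.
- by split; [move=> s _; exact: F_derivable | exact/cvg_at_right_filter/F_continuous].
- apply/cvgryPge => M; near=> s; rewrite /F -ler_pdivrMr //.
  have s_ge : M / xi <= s by near: s; apply: nbhs_pinfty_ge; rewrite num_real.
  by rewrite (le_trans s_ge) // lerDl divr_ge0 ?ltW.
- apply: continuous_in_subspaceT => u /set_mem; rewrite /= in_itv /= andbT => Fa_u.
  by apply: G_continuous; rewrite gt_eqF // (lt_le_trans Fa_gt0 Fa_u).
- move=> u; rewrite in_itv /= andbT => Fa_u.
  by rewrite /G mulr_ge0 ?expR_ge0 // invr_ge0 ltW // (lt_trans Fa_gt0 Fa_u).
Unshelve. all: by end_near.
Qed.

Lemma Gamma_seg0_affine a b : 0 < a + 1 / lam -> a <= b ->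
  Gamma_seg 0 ((a + 1 / lam) * xi) ((b + 1 / lam) * xi) =
  ((lam * expR (- (xi / lam)))%:E * \int[mu]_(s in `[a, b]) (survival lam xi s)%:E)%E.
Proof.
move=> a_gt ab; have Fa_gt0 : 0 < F a by rewrite mulr_gt0.
rewrite /Gamma_seg integral_Gamma0 -?integral_GF //; last first.
- by move=> u; rewrite /= in_itv /= => /andP[Fa_u _]; exact: lt_le_trans Fa_u.
- by move=> s; rewrite /= in_itv /= => /andP[a_s _]; rewrite (lt_le_trans a_gt) // lerD2r.
rewrite -[(a + 1 / lam) * xi]/(F a) -[(b + 1 / lam) * xi]/(F b).
apply: integration_by_substitution_increasing => //.
- by move=> s t _ _; exact: F_increasing.
- by rewrite F'E => s _; exact: cst_continuous.
- by rewrite F'E; exact: is_cvg_cst.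
- by rewrite F'E; exact: is_cvg_cst.
- split; first by move=> s _; exact: F_derivable.
  + exact/cvg_at_right_filter/F_continuous.
  + exact/cvg_at_left_filter/F_continuous.
- apply: continuous_in_subspaceT => u /set_mem; rewrite /= in_itv /= => /andP[Fa_u _].
  by apply: G_continuous; rewrite gt_eqF // (lt_le_trans Fa_gt0 Fa_u).
Qed.

End incomplete_gamma_affine.

Section telegraph_reset_limit.
Context {R : realType}.
Local Notation mu := (@lebesgue_measure R).
Variables lam xi v1 v2 x : R.
Hypotheses (lam_gt0 : 0 < lam) (xi_gt0 : 0 < xi) (v21 : v2 < v1).

Definition reset_ac (s : R) : R := expR (- xi * s) * p_ac lam v1 v2 x s.

Let one_add_gt0 s : 0 <= s -> 0 < 1 + lam * s.
Proof. by move=> s0; rewrite ltr_pwDl // mulr_ge0 // ltW. Qed.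

Let measurable_survival_ge0 (D : set R) : measurable D -> D `<=` `[0, +oo[ ->
  measurable_fun D (survival lam xi).
Proof.
move=> mD D0; apply: measurable_survival => // s /D0.
by rewrite /= in_itv /= andbT; exact: one_add_gt0.
Qed.

Lemma reset_acE s : 0 <= s -> reset_ac s =
  if v2 * s < x < v1 * s then lam / (v1 - v2) * survival lam xi s else 0.
Proof.
move=> s0; rewrite /reset_ac /p_ac /survival; case: ifP => _; last by rewrite mulr0.
by field; rewrite !gt_eqF ?subr_gt0 ?one_add_gt0.
Qed.

Lemma reset_ac_ge0 s : 0 <= s -> 0 <= reset_ac s.
Proof.
move=> s0; rewrite reset_acE //; case: ifP => // _.
by rewrite mulr_ge0 ?survival_ge0 ?one_add_gt0 // divr_ge0 ?subr_ge0 ?ltW.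
Qed.

Lemma reset_ac_le s : 0 <= s -> reset_ac s <= lam / (v1 - v2) * expR (- xi * s).
Proof.
move=> s0; have c_ge0 : 0 <= lam / (v1 - v2) by rewrite divr_ge0 ?subr_ge0 ?ltW.
rewrite reset_acE //; case: ifP => _; last by rewrite mulr_ge0 ?expR_ge0.
rewrite ler_wpM2l // ler_pdivrMr ?one_add_gt0 // ler_peMr ?expR_ge0 //.
by rewrite lerDl mulr_ge0 // ltW.
Qed.

Lemma measurable_reset_ac : measurable_fun (`[0, +oo[ : set R) reset_ac.
Proof.
apply: (eq_measurable_fun
  (fun s => if v2 * s < x < v1 * s then lam / (v1 - v2) * survival lam xi s else 0)).
  by move=> s; rewrite inE /= in_itv /= andbT => s0; rewrite reset_acE.
apply: measurable_fun_if => //.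
- apply: measurable_and; apply: measurable_fun_ltr => //;
  by apply: measurable_funTS; apply: measurable_funM.
- apply: measurable_funM => //.
  apply: (measurable_funS (measurable_itv `[0%R, +oo[)); first exact: subIsetl.
  exact: measurable_survival_ge0.
Qed.

Lemma reset_ac_cvg0 : reset_ac t @[t --> +oo] --> 0.
Proof.
apply: (@squeeze_cvgr _ _ _ _ (cst 0) (fun t => lam / (v1 - v2) * expR (- xi * t))).
- near=> t; have t0 : 0 <= t by near: t; apply: nbhs_pinfty_ge; rewrite num_real.
  by rewrite reset_ac_ge0 // reset_ac_le.
- exact: cvg_cst.
- by rewrite -(mulr0 (lam / (v1 - v2))); apply: cvgM; [exact: cvg_cst | exact: cvgr_expR_Nmul].
Unshelve. all: by end_near.
Qed.

Lemma integral_reset_ac_cvgy :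
  (\int[mu]_(s in `[0%R, t]) (reset_ac s)%:E)%E @[t --> +oo] -->
  (\int[mu]_(s in `[0%R, +oo[) (reset_ac s)%:E)%E.
Proof.
apply: ge0_integral_itv_cvgy; first by apply/measurable_EFinP; exact: measurable_reset_ac.
by move=> s s0; rewrite lee_fin reset_ac_ge0.
Qed.

Lemma integral_reset_ac (D : set R) : measurable D -> D `<=` `[0, +oo[ ->
  (forall s, 0 <= s -> (v2 * s < x < v1 * s) = (s \in D)) ->
  (\int[mu]_(s in `[0%R, +oo[) (reset_ac s)%:E =
   (lam / (v1 - v2))%:E * \int[mu]_(s in D) (survival lam xi s)%:E)%E.
Proof.
move=> mD D0 coneD; rewrite -ge0_integralZl_EFin //; first last.
- by rewrite divr_ge0 ?subr_ge0 ?ltW.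
- by apply/measurable_EFinP; exact: measurable_survival_ge0.
- by move=> s /D0; rewrite /= in_itv /= andbT => s0; rewrite lee_fin survival_ge0 ?one_add_gt0.
rewrite [LHS]integral_mkcond [RHS]integral_mkcond; apply: eq_integral => s _; rewrite !patchE.
have [s0|s_out] := boolP (s \in `[0, +oo[%classic).
  have s_ge0 : 0 <= s by move: s0; rewrite inE /= in_itv /= andbT.
  by rewrite reset_acE // coneD //; case: ifP.
rewrite ifF //; apply/negP => /set_mem /D0 /mem_set.
by rewrite (negbTE s_out).
Qed.

Lemma delta_sift_Hbar vj t : vj != 0 -> x / vj < t ->
  xi * delta_sift (survival lam xi) vj x t = Hbar lam xi vj x.
Proof.
move=> vj0 xt; rewrite /delta_sift /Hbar xt andbT; case: ifP => [x_pos|_]; last by rewrite mulr0.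
have vjx_ne0 : vj + lam * x != 0.
  have -> : vj + lam * x = vj * (1 + lam * (x / vj)) by field.
  by rewrite mulf_neq0 // gt_eqF // one_add_gt0 // ltW.
rewrite /survival -[- xi * x / vj]mulrA; case: (ltgtP vj 0) => [vj_lt0|vj_gt0|vj_eq0].
- by rewrite ltr0_sg // ltr0_norm //; field; rewrite vj0 vjx_ne0.
- by rewrite gtr0_sg // gtr0_norm //; field; rewrite vj0 vjx_ne0.
- by rewrite vj_eq0 eqxx in vj0.
Qed.

Lemma ptilde_jE vj t : vj != 0 -> x / vj < t ->
  ptilde_j lam xi v1 v2 vj x t =
  ((reset_ac t + Hbar lam xi vj x)%:E + xi%:E * \int[mu]_(s in `[0%R, t]) (reset_ac s)%:E)%E.
Proof.
move=> vj0 xt; have x_ne : x - vj * t != 0.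
  by rewrite subr_eq0; apply: contraTneq xt => ->; rewrite [vj * t]mulrC mulfK // ltxx.
rewrite /ptilde_j /p_dens /dirac_pt (negbTE x_ne) mul0e add0e.
by rewrite muleDr // addeA -!EFinM -EFinD -(delta_sift_Hbar _ _ vj0 xt).
Qed.

Lemma integral_reset_ac_eq0 : (forall s, 0 <= s -> ~~ (v2 * s < x < v1 * s)) ->
  (\int[mu]_(s in `[0%R, +oo[) (reset_ac s)%:E = 0)%E.
Proof.
move=> no_cone; apply: integral0_eq => s; rewrite /= in_itv /= andbT => s0.
by rewrite reset_acE // ifN // no_cone.
Qed.

(* [q, 1 - q >= 0] lets the two copies of the integral term be merged without
   knowing that the integral is finite *)
Lemma ptilde_cvg q : 0 <= q <= 1 -> v1 != 0 -> v2 != 0 ->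
  ptilde lam xi v1 v2 q x t @[t --> +oo] -->
  ((q * Hbar lam xi v1 x + (1 - q) * Hbar lam xi v2 x)%:E
   + xi%:E * \int[mu]_(s in `[0%R, +oo[) (reset_ac s)%:E)%E.
Proof.
move=> /andP[q_ge0 q_le1] v1_ne0 v2_ne0.
set H := q * Hbar lam xi v1 x + (1 - q) * Hbar lam xi v2 x.
have ptildeE : \forall t \near +oo,
    ((reset_ac t + H)%:E + xi%:E * \int[mu]_(s in `[0%R, t]) (reset_ac s)%:E)%E =
    ptilde lam xi v1 v2 q x t.
  near=> t; rewrite /ptilde !ptilde_jE //; last 2 first.
  - by near: t; apply: nbhs_pinfty_gt; rewrite num_real.
  - by near: t; apply: nbhs_pinfty_gt; rewrite num_real.
  rewrite [(q%:E * _)%E]muleDr // [((1 - q)%:E * _)%E]muleDr //.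
  rewrite addeACA -ge0_muleDl ?lee_fin ?subr_ge0 // -[(q%:E + _)%E]EFinD subrKC mul1e.
  by rewrite -!EFinM -EFinD /H; congr (_ + _)%E; congr EFin; ring.
apply: cvg_trans (near_eq_cvg ptildeE) _.
apply: cvgeD; first exact: fin_num_adde_defr.
- apply: cvg_EFin; first exact: nearW.
  by rewrite -[X in _ --> X]add0r; apply: cvgD; [exact: reset_ac_cvg0 | exact: cvg_cst].
- apply: cvgeZl => //; exact: integral_reset_ac_cvgy.
Unshelve. all: by end_near.
Qed.

Let Gamma_const :
  xi * expR (xi / lam) / (v1 - v2) * (lam * expR (- (xi / lam))) = xi * (lam / (v1 - v2)).
Proof. by rewrite expRN; field; rewrite !gt_eqF ?subr_gt0 ?expR_gt0. Qed.

Lemma Gamma_up_integral_reset_ac A : 0 <= A ->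
  (forall s, 0 <= s -> (v2 * s < x < v1 * s) = (A < s)) ->
  ((xi * expR (xi / lam) / (v1 - v2))%:E * Gamma_up 0 ((A + 1 / lam) * xi) =
   xi%:E * \int[mu]_(s in `[0%R, +oo[) (reset_ac s)%:E)%E.
Proof.
move=> A_ge0 coneA; have Ay0 : `]A, +oo[ `<=` `[0, +oo[.
  by move=> s /=; rewrite !in_itv /= !andbT => /ltW; exact: le_trans.
rewrite Gamma_up0_affine ?ltr_wpDl ?divr_gt0 // (@integral_reset_ac `]A, +oo[) //.
- rewrite -integral_itv_obnd_cbnd; last by apply/measurable_EFinP; exact: measurable_survival_ge0.
  by rewrite !muleA -!EFinM Gamma_const.
- by move=> s s0; rewrite coneA // mem_setE in_itv /= andbT.
Qed.

Lemma Gamma_seg_integral_reset_ac A B : 0 <= A -> A <= B ->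
  (forall s, 0 <= s -> (v2 * s < x < v1 * s) = (A < s < B)) ->
  ((xi * expR (xi / lam) / (v1 - v2))%:E * Gamma_seg 0 ((A + 1 / lam) * xi) ((B + 1 / lam) * xi) =
   xi%:E * \int[mu]_(s in `[0%R, +oo[) (reset_ac s)%:E)%E.
Proof.
move=> A_ge0 AB coneAB; have sub0 (b : itv_bound R) : [set` Interval (BRight A) b] `<=` `[0, +oo[.
  by move=> s /=; rewrite !in_itv /= andbT => /andP[/ltW + _]; exact: le_trans.
rewrite Gamma_seg0_affine ?ltr_wpDl ?divr_gt0 // (@integral_reset_ac `]A, B[) //.
- rewrite integral_itv_bndo_bndc; last by apply/measurable_EFinP; exact: measurable_survival_ge0.
  rewrite -integral_itv_obnd_cbnd; last by apply/measurable_EFinP; exact: measurable_survival_ge0.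
  by rewrite !muleA -!EFinM Gamma_const.
- by move=> s s0; rewrite coneAB // mem_setE in_itv.
Qed.

End telegraph_reset_limit.

Section cone.
Context {R : realType}.
Variables v1 v2 x : R.

Lemma Mx_ge0 : v2 < 0 < v1 -> 0 <= Mx v1 v2 x.
Proof.
move=> /andP[v2_lt0 v1_gt0]; rewrite /Mx le_max.
have [x_ge0|x_lt0] := leP 0 x; first by rewrite divr_ge0 // ltW.
by apply/orP; right; rewrite mulr_le0 ?ltW // invr_lt0.
Qed.

Lemma cone_Mx s : v2 < 0 < v1 -> (v2 * s < x < v1 * s) = (Mx v1 v2 x < s).
Proof.
move=> /andP[v2_lt0 v1_gt0]; rewrite /Mx gt_max ltr_pdivrMr // ltr_ndivrMr //.
by rewrite andbC [s * v1]mulrC [s * v2]mulrC.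
Qed.

Lemma cone_pos s : 0 < v2 -> 0 < v1 -> (v2 * s < x < v1 * s) = (x / v1 < s < x / v2).
Proof.
move=> v2_gt0 v1_gt0; rewrite ltr_pdivrMr // ltr_pdivlMr //.
by rewrite andbC [s * v1]mulrC [s * v2]mulrC.
Qed.

End cone.

Theorem corollary5 (R : realType) (lam xi v1 v2 q : R) :
  0 < lam -> 0 < xi -> v2 < v1 -> ((v2 < 0 < v1) \/ (0 < v2 < v1)) ->
  0 <= q <= 1 ->
  forall x : R,
    ((v2 < 0 < v1) ->
      ptilde lam xi v1 v2 q x t @[t --> +oo] -->
        ((q * Hbar lam xi v1 x + (1 - q) * Hbar lam xi v2 x)%R%:E
         + (xi * expR (xi / lam) / (v1 - v2))%R%:E
           * Gamma_up 0%R ((Mx v1 v2 x + 1 / lam) * xi)%R)%E) /\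
    ((0 < v2 < v1) ->
      ptilde lam xi v1 v2 q x t @[t --> +oo] -->
        ((q * Hbar lam xi v1 x + (1 - q) * Hbar lam xi v2 x)%R%:E
         + (if (0 < x)%R then
              (xi * expR (xi / lam) / (v1 - v2))%R%:E
              * Gamma_seg 0%R ((x / v1 + 1 / lam) * xi)%R ((x / v2 + 1 / lam) * xi)%R
            else 0))%E).
Proof.
move=> lam_gt0 xi_gt0 v21 _ q01 x; split.
- move=> v_sign; have /andP[v2_lt0 v1_gt0] := v_sign.
  rewrite (Gamma_up_integral_reset_ac _ _ _ _ x) //; last by move=> s _; exact: cone_Mx.
    by apply: ptilde_cvg => //; [exact: lt0r_neq0 | exact: ltr0_neq0].
  exact: Mx_ge0.
- move=> /andP[v2_gt0 _]; have v1_gt0 := lt_trans v2_gt0 v21.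
  have [x_gt0|x_le0] := ltP 0 x.
    rewrite (Gamma_seg_integral_reset_ac _ _ _ _ x) ?divr_ge0 ?ltW //.
    - by apply: ptilde_cvg => //; exact: lt0r_neq0.
    - by rewrite ltr_pM2l // ltf_pV2 ?posrE.
    - by move=> s _; exact: cone_pos.
  have := ptilde_cvg _ _ _ _ x lam_gt0 xi_gt0 v21 q q01 (lt0r_neq0 v1_gt0) (lt0r_neq0 v2_gt0).
  rewrite integral_reset_ac_eq0 ?mule0 // => s s0; rewrite cone_pos // negb_and.
  by apply/orP; right; rewrite -leNgt; apply: le_trans s0; rewrite mulr_le0_ge0 // invr_ge0 ltW.
Qed.
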